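(* Let $K$ be a field of characteristic $0$, let $L=\mathcal{L}(x,y)$ be the free Lie algebra over $K$ freely generated by $x,y$, let $\delta$ be the derivation of $L$ with $\delta(x)=0$, $\delta(y)=x$, and $L^\delta=\ker\delta$. Let $f\neq 0$ be an element of $L$ of degree $7$. Then $f\in L^\delta$ if and only if $f$ belongs to the Lie subalgebra of $L$ generated by $x$, $[y,x]$ and $[y,x,x,x,[y,x,y]]-[y,x,x,y,[y,x,x]]$.
   Context: Brackets are left-normed: $[a_1,a_2,\ldots,a_n]=[[\ldots[a_1,a_2],\ldots],a_n]$, and an inner bracket denotes a left-normed element inserted as a single argument. *)

(* The free Lie algebra L(x,y) over K is realized, as usual,
   as the Lie subalgebra of Lie elements of the free associative algebra
   K<x,y> generated by x and y (bracket [a,b] = ab - ba).  We work inside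
   the algebra K<<x,y>> of all functions (words -> K); the Lie elements
   generated by x, y are automatically finitely supported.  Letters:
   true = x, false = y. *)
From mathcomp Require Import all_boot all_order all_algebra.
Set Implicit Arguments.
Unset Strict Implicit.
Unset Printing Implicit Defensive.
Import GRing.Theory.
Local Open Scope ring_scope.

Definition word := seq bool.
Definition series (K : fieldType) := word -> K.

Section Ops.
Variable K : fieldType.

Definition s0 : series K := fun _ => 0.
Definition sadd (p q : series K) : series K := fun w => p w + q w.
Definition sscale (c : K) (p : series K) : series K := fun w => c * p w.
Definition smul (p q : series K) : series K :=
  fun w => \sum_(i < (size w).+1) p (take i w) * q (drop i w).
Definition sbr (p q : series K) : series K := fun w => smul p q w - smul q p w.
Definition letter (b : bool) : series K := fun w => if w == [:: b] then 1 else 0.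
Definition sx : series K := letter true.
Definition sy : series K := letter false.

(* The derivation delta with delta(x) = 0, delta(y) = x, extended to words:
   delta(w) = sum over positions carrying y of w with that y replaced by x. *)
Definition delta (p : series K) : series K :=
  fun w => \sum_(i < size w | nth false w i) p (set_nth false w i false).

Inductive lie_gen (S : series K -> Prop) : series K -> Prop :=
  | lie_gen_base p : S p -> lie_gen S p
  | lie_gen_zero : lie_gen S s0
  | lie_gen_add p q : lie_gen S p -> lie_gen S q -> lie_gen S (sadd p q)
  | lie_gen_scale c p : lie_gen S p -> lie_gen S (sscale c p)
  | lie_gen_br p q : lie_gen S p -> lie_gen S q -> lie_gen S (sbr p q).

Definition freeLie (p : series K) : Prop := lie_gen (fun q => q = sx \/ q = sy) p.

Definition homog (n : nat) (p : series K) : Prop :=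
  forall w : word, size w <> n -> p w = 0.

Definition g7 : series K :=
  sadd (sbr (sbr (sbr (sbr sy sx) sx) sx) (sbr (sbr sy sx) sy))
       (sscale (-1) (sbr (sbr (sbr (sbr sy sx) sx) sy) (sbr (sbr sy sx) sx))).

Definition gens5p5 (q : series K) : Prop := q = sx \/ q = sbr sy sx \/ q = g7.
End Ops.

From Stdlib Require Import FunctionalExtensionality ZArith.
From mathcomp Require Import all_boot all_order all_algebra.
From mathcomp Require Import ring zify ssrZ.
Set Implicit Arguments.
Unset Strict Implicit.
Unset Printing Implicit Defensive.
Import GRing.Theory.
Local Open Scope ring_scope.

(* Every homogeneous Lie element of degree 7 is a linear combination of the
   128 left-normed words [a, r_1, ..., r_6] in the letters x, y.  The derivation
   delta kills x, [y,x] and g7, hence the whole Lie subalgebra they generate.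
   Conversely, with u = [y,x] the elements kappa_0, ..., kappa_4 :=
     [u,x,x,x,x,x], [u,x,x,x,u], [u,x,x,u,x], [u,x,u,u], g7
   of that subalgebra span the kernel: an integer certificate gives, for every
   left-normed word l of degree 7, an identity
     60 l = sum_j D_j(l) kappa_j + sum_(k < 13) (delta l)(e_k) m_k
   with fixed test words e_k and fixed coefficient series m_k.  By linearity it
   holds for every f of degree 7 in L, and if delta f = 0 the second sum
   vanishes; as 60 is invertible in characteristic 0, f lies in the subalgebra.
   The identities are checked by computation over Z, where the coefficients of
   bracket monomials can be evaluated exactly, and then mapped into K. *)

Local Notation funext := functional_extensionality.

Section SeriesAlgebra.
Variable K : fieldType.
Local Notation series := (series K).
Local Notation s0 := (s0 K).

Definition lquot (b : bool) (p : series) : series := fun u => p (b :: u).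

Lemma s0E w : s0 w = 0. Proof. by []. Qed.
Lemma saddE (p q : series) w : sadd p q w = p w + q w. Proof. by []. Qed.
Lemma sscaleE c (p : series) w : sscale c p w = c * p w. Proof. by []. Qed.
Lemma sbrE (p q : series) w : sbr p q w = smul p q w - smul q p w. Proof. by []. Qed.

Lemma smul_nil (p q : series) : smul p q [::] = p [::] * q [::].
Proof. by rewrite /smul big_ord1. Qed.

Lemma smul_cons (p q : series) b w :
  smul p q (b :: w) = p [::] * q (b :: w) + smul (lquot b p) q w.
Proof. by rewrite /smul big_ord_recl. Qed.

Lemma lquot_smul (p q : series) b :
  lquot b (smul p q) = sadd (sscale (p [::]) (lquot b q)) (smul (lquot b p) q).
Proof. by apply: funext => w; rewrite /lquot smul_cons. Qed.

Lemma smulDl (p q r : series) : smul (sadd p q) r = sadd (smul p r) (smul q r).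
Proof.
apply: funext => w; rewrite /smul /sadd -big_split /=.
by apply: eq_bigr => i _; rewrite mulrDl.
Qed.

Lemma smulDr (p q r : series) : smul p (sadd q r) = sadd (smul p q) (smul p r).
Proof.
apply: funext => w; rewrite /smul /sadd -big_split /=.
by apply: eq_bigr => i _; rewrite mulrDr.
Qed.

Lemma smulZl c (p q : series) : smul (sscale c p) q = sscale c (smul p q).
Proof.
apply: funext => w; rewrite /smul /sscale mulr_sumr.
by apply: eq_bigr => i _; rewrite mulrA.
Qed.

Lemma smulZr c (p q : series) : smul p (sscale c q) = sscale c (smul p q).
Proof.
apply: funext => w; rewrite /smul /sscale mulr_sumr.
by apply: eq_bigr => i _; rewrite mulrCA.
Qed.

Lemma smul0l (p : series) : smul s0 p = s0.
Proof. by apply: funext => w; rewrite /smul big1 // => i _; rewrite mul0r. Qed.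

Lemma smul0r (p : series) : smul p s0 = s0.
Proof. by apply: funext => w; rewrite /smul big1 // => i _; rewrite mulr0. Qed.

Lemma smulA (p q r : series) : smul (smul p q) r = smul p (smul q r).
Proof.
apply: funext => w; elim: w p => [|b w IH] p; first by rewrite !smul_nil mulrA.
rewrite smul_cons lquot_smul smulDl smulZl saddE sscaleE IH.
by rewrite smul_nil !smul_cons mulrDr addrA mulrA.
Qed.

Lemma delta_nil (p : series) : delta p [::] = 0.
Proof. by rewrite /delta big_ord0. Qed.

Lemma delta_cons (p : series) b w :
  delta p (b :: w) = (if b then p (false :: w) else 0) + delta (lquot b p) w.
Proof. by rewrite /delta big_mkcond big_ord_recl /= -big_mkcond. Qed.

Lemma deltaD (p q : series) : delta (sadd p q) = sadd (delta p) (delta q).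
Proof. by apply: funext => w; rewrite /delta /sadd big_split. Qed.

Lemma deltaZ c (p : series) : delta (sscale c p) = sscale c (delta p).
Proof. by apply: funext => w; rewrite /delta /sscale mulr_sumr. Qed.

Lemma delta0 : delta s0 = s0.
Proof. by apply: funext => w; rewrite /delta big1. Qed.

Lemma lquot_delta (p : series) b :
  lquot b (delta p) = sadd (if b then lquot false p else s0) (delta (lquot b p)).
Proof. by apply: funext => w; rewrite /lquot delta_cons; case: b. Qed.

Lemma delta_smul (p q : series) :
  delta (smul p q) = sadd (smul (delta p) q) (smul p (delta q)).
Proof.
apply: funext => w; elim: w p => [|b w IH] p.
  by rewrite saddE !smul_nil !delta_nil mul0r mulr0 addr0.
rewrite delta_cons lquot_smul deltaD deltaZ saddE sscaleE IH !saddE.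
rewrite !smul_cons delta_nil mul0r add0r lquot_delta smulDl saddE delta_cons.
by case: b; rewrite ?smul0l ?s0E; ring.
Qed.

Lemma sbr_smul (p q : series) : sbr p q = sadd (smul p q) (sscale (-1) (smul q p)).
Proof. by apply: funext => w; rewrite sbrE saddE sscaleE mulN1r. Qed.

Lemma sbrDl (p q r : series) : sbr (sadd p q) r = sadd (sbr p r) (sbr q r).
Proof. by apply: funext => w; rewrite !(saddE, sbrE, smulDl, smulDr); ring. Qed.

Lemma sbrDr (p q r : series) : sbr p (sadd q r) = sadd (sbr p q) (sbr p r).
Proof. by apply: funext => w; rewrite !(saddE, sbrE, smulDl, smulDr); ring. Qed.

Lemma sbrZl c (p q : series) : sbr (sscale c p) q = sscale c (sbr p q).
Proof. by apply: funext => w; rewrite !(sscaleE, sbrE, smulZl, smulZr); ring. Qed.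

Lemma sbrZr c (p q : series) : sbr p (sscale c q) = sscale c (sbr p q).
Proof. by apply: funext => w; rewrite !(sscaleE, sbrE, smulZl, smulZr); ring. Qed.

Lemma sbr0l (p : series) : sbr s0 p = s0.
Proof. by apply: funext => w; rewrite sbrE smul0l smul0r subrr. Qed.

Lemma sbr0r (p : series) : sbr p s0 = s0.
Proof. by apply: funext => w; rewrite sbrE smul0l smul0r subrr. Qed.

Lemma sbr_jacobi (a b c : series) :
  sbr a (sbr b c) = sadd (sbr (sbr a b) c) (sscale (-1) (sbr (sbr a c) b)).
Proof.
apply: funext => w; rewrite !sbr_smul !(smulDl, smulDr, smulZl, smulZr) !smulA.
by rewrite !(saddE, sscaleE); ring.
Qed.

Lemma delta_sbr (p q : series) :
  delta (sbr p q) = sadd (sbr (delta p) q) (sbr p (delta q)).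
Proof.
rewrite !sbr_smul deltaD deltaZ !delta_smul.
by apply: funext => w; rewrite !(saddE, sscaleE, smulDl, smulDr, smulZl, smulZr); ring.
Qed.

End SeriesAlgebra.

Section LieClosure.
Variables (K : fieldType) (S : series K -> Prop).

Lemma lie_gen_delta_eq0 (f : series K) :
  (forall q, S q -> delta q = s0 K) -> lie_gen S f -> delta f = s0 K.
Proof.
move=> dS; elim=> [q /dS //|| p q _ dp _ dq | c p _ dp | p q _ dp _ dq].
- exact: delta0.
- by rewrite deltaD dp dq; apply: funext => w; rewrite saddE addr0.
- by rewrite deltaZ dp; apply: funext => w; rewrite sscaleE mulr0.
- by rewrite delta_sbr dp dq sbr0l sbr0r; apply: funext => w; rewrite saddE addr0.
Qed.

Lemma lie_gen_sum m (a : nat -> K) (F : nat -> series K) :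
  (forall j, lie_gen S (F j)) -> lie_gen S (fun w => \sum_(j < m) a j * F j w).
Proof.
move=> SF; elim: m => [|m IH].
  have -> : (fun w => \sum_(j < 0) a j * F j w) = s0 K.
    by apply: funext => w; rewrite big_ord0.
  exact: lie_gen_zero.
have -> : (fun w => \sum_(j < m.+1) a j * F j w) =
          sadd (fun w => \sum_(j < m) a j * F j w) (sscale (a m) (F m)).
  by apply: funext => w; rewrite big_ord_recr.
by apply: lie_gen_add => //; apply: lie_gen_scale.
Qed.

End LieClosure.

Inductive lie_term := Lleaf of bool | Lbr of lie_term & lie_term.

Fixpoint deg (t : lie_term) : nat :=
  match t with Lleaf _ => 1%N | Lbr a c => (deg a + deg c)%N end.

Definition lnorm (t : lie_term) (s : seq lie_term) : lie_term := foldl Lbr t s.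

Definition left_normed (a : bool) (r : word) : lie_term := lnorm (Lleaf a) (map Lleaf r).

Section LeftNormedSpan.
Variable K : fieldType.
Local Notation series := (series K).

Fixpoint eval_term (t : lie_term) : series :=
  match t with Lleaf b => letter K b | Lbr a c => sbr (eval_term a) (eval_term c) end.

Lemma lie_gen_lnorm (S : series -> Prop) t s :
  lie_gen S (eval_term t) -> (forall u, List.In u s -> lie_gen S (eval_term u)) ->
  lie_gen S (eval_term (lnorm t s)).
Proof.
elim: s t => [|u s IH] t //= St Ss.
by apply: IH => [|v vs]; [apply: lie_gen_br => //; apply: Ss; left | apply: Ss; right].
Qed.

Inductive left_normed_span (n : nat) : series -> Prop :=
  | lns0 : left_normed_span n (s0 K)
  | lnsD p q : left_normed_span n p -> left_normed_span n q ->
      left_normed_span n (sadd p q)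
  | lnsZ c p : left_normed_span n p -> left_normed_span n (sscale c p)
  | lns_left_normed a r : (size r).+1 = n ->
      left_normed_span n (eval_term (left_normed a r)).

Lemma left_normed_rcons a r b :
  eval_term (left_normed a (rcons r b)) = sbr (eval_term (left_normed a r)) (letter K b).
Proof. by rewrite /left_normed map_rcons /lnorm foldl_rcons. Qed.

Lemma left_normed_span_br_letter n p b :
  left_normed_span n p -> left_normed_span n.+1 (sbr p (letter K b)).
Proof.
elim=> [|p1 q1 _ IH1 _ IH2|c p1 _ IH|a r Hr].
- by rewrite sbr0l; exact: lns0.
- by rewrite sbrDl; apply: lnsD.
- by rewrite sbrZl; apply: lnsZ.
- by rewrite -left_normed_rcons; apply: lns_left_normed; rewrite size_rcons Hr.
Qed.

Lemma left_normed_span_br k q : left_normed_span k q ->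
  forall m p, left_normed_span m p -> left_normed_span (m + k)%N (sbr p q).
Proof.
elim=> [|q1 q2 _ IH1 _ IH2|c q1 _ IH|a r <-] m p Hp.
- by rewrite sbr0r; exact: lns0.
- by rewrite sbrDr; apply: lnsD; [apply: IH1|apply: IH2].
- by rewrite sbrZr; apply: lnsZ; apply: IH.
elim/last_ind: r m p Hp => [|r b IH] m p Hp.
  by rewrite addn1; apply: left_normed_span_br_letter.
rewrite left_normed_rcons sbr_jacobi size_rcons.
apply: lnsD; last apply: lnsZ.
  by rewrite addnS; apply/left_normed_span_br_letter/IH.
by rewrite -addSnnS; apply/IH/left_normed_span_br_letter.
Qed.

Definition homog_part (n : nat) (p : series) : series :=
  fun w => if size w == n then p w else 0.

Lemma homog_partE n p : homog n p -> homog_part n p = p.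
Proof. by move=> hp; apply: funext => w; rewrite /homog_part; case: eqP => // /hp ->. Qed.

Lemma homog_part_smul n (p q : series) w :
  homog_part n (smul p q) w =
  \sum_(i < n.+1) smul (homog_part i p) (homog_part (n - i) q) w.
Proof.
rewrite /smul exchange_big /=.
have E (j : 'I_(size w).+1) (i : 'I_n.+1) :
    homog_part i p (take j w) * homog_part (n - i) q (drop j w) =
    if (i == j :> nat) && (size w == n) then p (take j w) * q (drop j w) else 0.
  have Hj := ltn_ord j; have Hi := ltn_ord i.
  rewrite /homog_part size_takel ?size_drop; last by rewrite -ltnS.
  case: (eqVneq (i : nat) j) => [Eij|_] /=; last by rewrite mul0r.
  have -> : (size w - j == n - i)%N = (size w == n) by apply/eqP/eqP; lia.
  by case: (size w == n); rewrite ?mulr0.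
under eq_bigr do under eq_bigr do rewrite E.
rewrite /homog_part; case: eqP => Hw; last first.
  by rewrite big1 // => j _; rewrite big1 // => i _; rewrite andbF.
apply: eq_bigr => j _; under eq_bigr do rewrite andbT.
rewrite -big_mkcond /= (big_ord1_eq _ (fun _ => p (take j w) * q (drop j w)) j n.+1).
by have := ltn_ord j; rewrite {2}Hw => ->.
Qed.

Lemma homog_part_sbr n (p q : series) :
  homog_part n (sbr p q) =
  (fun w => \sum_(i < n.+1) sbr (homog_part i p) (homog_part (n - i) q) w).
Proof.
apply: funext => w.
have -> : homog_part n (sbr p q) w =
          homog_part n (smul p q) w - homog_part n (smul q p) w.
  by rewrite /homog_part sbrE; case: (size w == n); rewrite ?subr0.
rewrite !homog_part_smul sumrB; congr (_ - _).
rewrite (reindex_inj rev_ord_inj) /=; apply: eq_bigr => i _.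
have := ltn_ord i; rewrite ltnS => Hi.
by rewrite subSS subKn.
Qed.

Lemma left_normed_span_sum n m (F : 'I_m -> series) :
  (forall i, left_normed_span n (F i)) ->
  left_normed_span n (fun w => \sum_(i < m) F i w).
Proof.
elim: m F => [|m IH] F HF.
  have -> : (fun w => \sum_(i < 0) F i w) = s0 K.
    by apply: funext => w; rewrite big_ord0.
  exact: lns0.
have -> : (fun w => \sum_(i < m.+1) F i w) =
          sadd (fun w => \sum_(i < m) F (widen_ord (leqnSn m) i) w) (F ord_max).
  by apply: funext => w; rewrite big_ord_recr.
by apply: lnsD; [apply: IH|].
Qed.

Lemma homog_part0 n : homog_part n (s0 K) = s0 K.
Proof. by apply: funext => w; rewrite /homog_part; case: ifP. Qed.

Lemma homog_partD n p q : homog_part n (sadd p q) = sadd (homog_part n p) (homog_part n q).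
Proof. by apply: funext => w; rewrite /homog_part !saddE; case: ifP; rewrite ?addr0. Qed.

Lemma homog_partZ n c p : homog_part n (sscale c p) = sscale c (homog_part n p).
Proof. by apply: funext => w; rewrite /homog_part !sscaleE; case: ifP; rewrite ?mulr0. Qed.

Lemma homog_part_letter n b :
  homog_part n (letter K b) = if n == 1%N then letter K b else s0 K.
Proof.
apply: funext => w; rewrite /homog_part /letter.
have [->|n1] := eqVneq n 1%N; case: (eqVneq w [:: b]) => [->|_] //=; try by case: ifP.
by rewrite eq_sym (negbTE n1).
Qed.

Lemma freeLie_homog_part p : freeLie p -> forall n, left_normed_span n (homog_part n p).
Proof.
elim=> [q gq|| p1 q1 _ IH1 _ IH2|c p1 _ IH|p1 q1 _ IH1 _ IH2] n.
- have [b ->] : exists b, q = letter K b by case: gq => ->; eexists.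
  rewrite homog_part_letter; case: eqP => [->|_]; last exact: lns0.
  exact: (@lns_left_normed 1 b [::]).
- by rewrite homog_part0; apply: lns0.
- by rewrite homog_partD; apply: lnsD.
- by rewrite homog_partZ; apply: lnsZ.
- rewrite homog_part_sbr; apply: left_normed_span_sum => i.
  by have := left_normed_span_br (IH2 (n - i)%N) (IH1 i); rewrite subnKC // -ltnS.
Qed.

End LeftNormedSpan.

Lemma deg_left_normed a r : deg (left_normed a r) = (size r).+1.
Proof.
elim/last_ind: r => // r b IH.
by rewrite /left_normed map_rcons /lnorm foldl_rcons /= -/(lnorm _ _) IH size_rcons addn1.
Qed.

Fixpoint term_coef (R : pzRingType) (t : lie_term) (w : word) : R :=
  match t with
  | Lleaf b => if w == [:: b] then 1 else 0
  | Lbr a c =>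
      if size w == (deg a + deg c)%N then
        term_coef R a (take (deg a) w) * term_coef R c (drop (deg a) w)
        - term_coef R c (take (deg c) w) * term_coef R a (drop (deg c) w)
      else 0
  end.

Lemma term_coef_deg (R : pzRingType) t w : size w != deg t -> term_coef R t w = 0.
Proof.
case: t => [b|a c] /= hw; last by rewrite (negbTE hw).
by case: eqVneq => // wb; rewrite wb in hw.
Qed.

Lemma rmorph_term_coef (R S : pzRingType) (f : {rmorphism R -> S}) t w :
  f (term_coef R t w) = term_coef S t w.
Proof.
elim: t w => [b|a IHa c IHc] w /=; first by case: ifP; rewrite ?rmorph1 ?rmorph0.
by case: ifP; rewrite ?rmorph0 // rmorphB !rmorphM !IHa !IHc.
Qed.

Fixpoint delta_coef (R : pzRingType) (h : word -> R) (w : word) : R :=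
  if w is b :: w' then (if b then h (false :: w') else 0) + delta_coef (fun u => h (b :: u)) w'
  else 0.

Lemma rmorph_delta_coef (R S : pzRingType) (f : {rmorphism R -> S}) h w :
  f (delta_coef h w) = delta_coef (f \o h) w.
Proof.
elim: w h => [|b w IH] h /=; first exact: rmorph0.
by rewrite rmorphD IH; case: b; rewrite ?rmorph0.
Qed.

Lemma delta_coef_ext (R : pzRingType) (h h' : word -> R) w :
  (forall u, size u = size w -> h u = h' u) -> delta_coef h w = delta_coef h' w.
Proof.
elim: w h h' => [|b w IH] h h' hh //=.
by rewrite hh //; congr (_ + _); apply: IH => u uw; apply: hh; rewrite /= uw.
Qed.

Lemma delta_coef0 (R : pzRingType) w : delta_coef (fun _ => 0 : R) w = 0.
Proof. by elim: w => [|b w /= ->] //; case: b; rewrite addr0. Qed.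

Fixpoint words (n : nat) : seq word :=
  if n is n'.+1 then map (cons true) (words n') ++ map (cons false) (words n')
  else [:: [::]].

Lemma mem_words n w : (w \in words n) = (size w == n).
Proof.
have mem_cons (b c : bool) (s : seq word) (u : word) :
    (b :: u \in map (cons c) s) = (b == c) && (u \in s).
  have cons_inj : injective (cons c) by move=> ? ? [].
  by case: eqP => [->|bc]; [rewrite mem_map|apply/mapP => -[v _ []]].
elim: n w => [|n IH] [|b w] /=; rewrite ?mem_seq1 //.
  by rewrite mem_cat; apply/norP; split; apply/mapP => -[].
by rewrite mem_cat !mem_cons IH eqSS; case: b; rewrite /= ?orbF.
Qed.

Definition zK (K : fieldType) : {rmorphism Z -> K} := (intr \o int_of_Z)%FUN.

Section CoefficientModel.
Variable K : fieldType.
Local Notation series := (series K).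

Lemma smul_homog (p q : series) d e w : homog d p -> homog e q ->
  smul p q w = if size w == (d + e)%N then p (take d w) * q (drop d w) else 0.
Proof.
move=> hp hq; rewrite /smul.
have -> : \sum_(i < (size w).+1) p (take i w) * q (drop i w) =
          \sum_(i < (size w).+1 | i == d :> nat) p (take d w) * q (drop d w).
  rewrite [RHS]big_mkcond; apply: eq_bigr => i _.
  case: eqP => [->//|nid]; rewrite hp ?mul0r //.
  by have := ltn_ord i; rewrite ltnS => iw; rewrite size_takel //; apply/eqP.
rewrite (big_ord1_eq _ (fun _ => p (take d w) * q (drop d w)) d (size w).+1) ltnS.
case: eqP => [->|we]; first by rewrite leq_addr.
by case: leqP => // dw; rewrite hq ?mulr0 // size_drop; lia.
Qed.

Lemma eval_term_coef t : eval_term K t = term_coef K t.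
Proof.
elim: t => [b|a IHa c IHc] /=; apply: funext => w; first by rewrite /letter.
have homog_term (t : lie_term) : homog (deg t) (term_coef K t).
  by move=> u /eqP; apply: term_coef_deg.
rewrite sbrE IHa IHc !(smul_homog _ (homog_term _) (homog_term _)).
by rewrite [(deg c + _)%N]addnC; case: ifP; rewrite ?subrr.
Qed.

Lemma eval_term_zcoef t : eval_term K t = zK K \o term_coef Z t.
Proof. by apply: funext => w; rewrite eval_term_coef -(rmorph_term_coef (zK K)). Qed.

Lemma delta_coefE (p : series) : delta p = delta_coef p.
Proof.
apply: funext => w; elim: w p => [|b w IH] p; first exact: delta_nil.
by rewrite delta_cons IH.
Qed.

Lemma delta_zcoef_eq0 (h : word -> Z) d :
  (forall u, size u != d -> h u = 0) -> all (fun w => delta_coef h w == 0) (words d) ->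
  delta (zK K \o h) = s0 K.
Proof.
move=> hd hall; apply: funext => w; rewrite delta_coefE -rmorph_delta_coef s0E.
case: (eqVneq (size w) d) => [wd|wd].
  by rewrite (eqP (allP hall w _)) ?rmorph0 // mem_words wd.
rewrite (@delta_coef_ext _ h (fun _ => 0)) ?delta_coef0 ?rmorph0 // => u uw.
by apply: hd; rewrite uw.
Qed.

End CoefficientModel.

Definition Lx := Lleaf true.
Definition Ly := Lleaf false.
Definition Lu := Lbr Ly Lx.

Definition kernel_terms : seq lie_term :=
  [:: lnorm Lu [:: Lx; Lx; Lx; Lx; Lx]; lnorm Lu [:: Lx; Lx; Lx; Lu];
      lnorm Lu [:: Lx; Lx; Lu; Lx]; lnorm Lu [:: Lx; Lu; Lu]].

Definition g7_pos := lnorm Lu [:: Lx; Lx; Lbr Lu Ly].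
Definition g7_neg := lnorm Lu [:: Lx; Ly; Lbr Lu Lx].

Definition kernel_coef (R : pzRingType) (j : nat) (w : word) : R :=
  if (j < 4)%N then term_coef R (nth Lx kernel_terms j) w
  else term_coef R g7_pos w - term_coef R g7_neg w.

Lemma kernel_coef_deg (R : pzRingType) j w : size w != 7%N -> kernel_coef R j w = 0.
Proof.
move=> w7; rewrite /kernel_coef; case: ifP => [j4|_]; last by rewrite !term_coef_deg ?subrr.
by rewrite term_coef_deg //; case: j j4 => [|[|[|[|]]]].
Qed.

Section Kernel.
Variable K : fieldType.
Local Notation G := (gens5p5 (K:=K)).

Definition kernel_elt (j : nat) : series K :=
  if (j < 4)%N then eval_term K (nth Lx kernel_terms j) else g7 K.

Lemma kernel_eltE j w : kernel_elt j w = zK K (kernel_coef Z j w).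
Proof.
rewrite /kernel_elt /kernel_coef.
case: ifP => _; first by rewrite eval_term_zcoef.
by rewrite rmorphB !rmorph_term_coef -!eval_term_coef /g7 saddE sscaleE mulN1r.
Qed.

Lemma lie_gen_kernel_elt j : lie_gen G (kernel_elt j).
Proof.
have gx : lie_gen G (eval_term K Lx) by apply: lie_gen_base; left.
have gu : lie_gen G (eval_term K Lu) by apply: lie_gen_base; right; left.
rewrite /kernel_elt; case: ifP => [j4|_]; last by apply: lie_gen_base; right; right.
case: j j4 => [|[|[|[|//]]]] _; apply: lie_gen_lnorm => // u /=;
  by repeat case=> [<- //|].
Qed.

Lemma delta_gens5p5 q : G q -> delta q = s0 K.
Proof.
case=> [->|[->|->]].
- rewrite -[sx K]/(eval_term K Lx) eval_term_zcoef.
  by apply: (@delta_zcoef_eq0 _ _ 1%N) => [|]; [exact: (@term_coef_deg _ Lx)|vm_compute].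
- rewrite -[sbr _ _]/(eval_term K Lu) eval_term_zcoef.
  by apply: (@delta_zcoef_eq0 _ _ 2%N) => [|]; [exact: (@term_coef_deg _ Lu)|vm_compute].
have -> : g7 K = zK K \o kernel_coef Z 4.
  by apply: funext => w; rewrite -[RHS]/(zK K (kernel_coef Z 4 w)) -kernel_eltE.
by apply: (@delta_zcoef_eq0 _ _ 7%N) => [|]; [exact: (@kernel_coef_deg _ 4)|vm_compute].
Qed.

End Kernel.

(* Only applied to words of length 7; [Lx] is a junk value. *)
Definition ln_word (v : word) : lie_term := if v is a :: r then left_normed a r else Lx.

(* Row [index v (words 7)] of [cert_kernel_coords] lists the D_j(l_v) of the
   header, row [index w (words 7)] of [cert_delta_coords] the m_k(w), and the
   e_k are [cert_test_words]. *)
Local Open Scope Z_scope.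
Definition cert_kernel_coords : seq (seq Z) := [::
  [:: 0; 0; 0; 0; 0];
  [:: 0; 0; 0; 0; 0];
  [:: 0; 0; 0; 0; 0];
  [:: 0; 0; 0; 0; 0];
  [:: 0; 0; 0; 0; 0];
  [:: 0; 0; 0; 0; 0];
  [:: 0; 0; 0; 0; 0];
  [:: 0; 0; 0; 0; 0];
  [:: 0; 0; 0; 0; 0];
  [:: 0; 0; 0; 0; 0];
  [:: 0; 0; 0; 0; 0];
  [:: 0; 0; 0; 0; 0];
  [:: 0; 0; 0; 0; 0];
  [:: 0; 0; 0; 0; 0];
  [:: 0; 0; 0; 0; 0];
  [:: 0; 0; 0; 0; 0];
  [:: 0; 0; 0; 0; 0];
  [:: 0; 0; 0; 0; 0];
  [:: 0; 0; 0; 0; 0];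
  [:: 0; 0; 0; 0; 0];
  [:: 0; 0; 0; 0; 0];
  [:: 0; 0; 0; 0; 0];
  [:: 0; 0; 0; 0; 0];
  [:: 0; 0; 0; 0; 0];
  [:: 0; 0; 0; 0; 0];
  [:: 0; 0; 0; 0; 0];
  [:: 0; 0; 0; 0; 0];
  [:: 0; 0; 0; 0; 0];
  [:: 0; 0; 0; 0; 0];
  [:: 0; 0; 0; 0; 0];
  [:: 0; 0; 0; 0; 0];
  [:: 0; 0; 0; 0; 0];
  [:: (-60); 0; 0; 0; 0];
  [:: 0; (-300); 600; 0; 0];
  [:: 0; (-360); 600; 0; 0];
  [:: 0; 0; 0; (-960); 240];
  [:: 0; (-360); 540; 0; 0];
  [:: 0; 0; 0; (-900); 180];
  [:: 0; 0; 0; (-720); 180];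
  [:: 0; 0; 0; 0; 0];
  [:: 0; (-360); 480; 0; 0];
  [:: 0; 0; 0; (-840); 120];
  [:: 0; 0; 0; (-720); 120];
  [:: 0; 0; 0; 0; 0];
  [:: 0; 0; 0; (-720); 120];
  [:: 0; 0; 0; 0; 0];
  [:: 0; 0; 0; 0; 0];
  [:: 0; 0; 0; 0; 0];
  [:: 0; (-360); 480; 0; 0];
  [:: 0; 0; 0; (-840); 120];
  [:: 0; 0; 0; (-720); 120];
  [:: 0; 0; 0; 0; 0];
  [:: 0; 0; 0; (-720); 120];
  [:: 0; 0; 0; 0; 0];
  [:: 0; 0; 0; 0; 0];
  [:: 0; 0; 0; 0; 0];
  [:: 0; 0; 0; (-720); 180];
  [:: 0; 0; 0; 0; 0];
  [:: 0; 0; 0; 0; 0];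
  [:: 0; 0; 0; 0; 0];
  [:: 0; 0; 0; 0; 0];
  [:: 0; 0; 0; 0; 0];
  [:: 0; 0; 0; 0; 0];
  [:: 0; 0; 0; 0; 0];
  [:: 60; 0; 0; 0; 0];
  [:: 0; 300; (-600); 0; 0];
  [:: 0; 360; (-600); 0; 0];
  [:: 0; 0; 0; 960; (-240)];
  [:: 0; 360; (-540); 0; 0];
  [:: 0; 0; 0; 900; (-180)];
  [:: 0; 0; 0; 720; (-180)];
  [:: 0; 0; 0; 0; 0];
  [:: 0; 360; (-480); 0; 0];
  [:: 0; 0; 0; 840; (-120)];
  [:: 0; 0; 0; 720; (-120)];
  [:: 0; 0; 0; 0; 0];
  [:: 0; 0; 0; 720; (-120)];
  [:: 0; 0; 0; 0; 0];
  [:: 0; 0; 0; 0; 0];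
  [:: 0; 0; 0; 0; 0];
  [:: 0; 360; (-480); 0; 0];
  [:: 0; 0; 0; 840; (-120)];
  [:: 0; 0; 0; 720; (-120)];
  [:: 0; 0; 0; 0; 0];
  [:: 0; 0; 0; 720; (-120)];
  [:: 0; 0; 0; 0; 0];
  [:: 0; 0; 0; 0; 0];
  [:: 0; 0; 0; 0; 0];
  [:: 0; 0; 0; 720; (-180)];
  [:: 0; 0; 0; 0; 0];
  [:: 0; 0; 0; 0; 0];
  [:: 0; 0; 0; 0; 0];
  [:: 0; 0; 0; 0; 0];
  [:: 0; 0; 0; 0; 0];
  [:: 0; 0; 0; 0; 0];
  [:: 0; 0; 0; 0; 0];
  [:: 0; 0; 0; 0; 0];
  [:: 0; 0; 0; 0; 0];
  [:: 0; 0; 0; 0; 0];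
  [:: 0; 0; 0; 0; 0];
  [:: 0; 0; 0; 0; 0];
  [:: 0; 0; 0; 0; 0];
  [:: 0; 0; 0; 0; 0];
  [:: 0; 0; 0; 0; 0];
  [:: 0; 0; 0; 0; 0];
  [:: 0; 0; 0; 0; 0];
  [:: 0; 0; 0; 0; 0];
  [:: 0; 0; 0; 0; 0];
  [:: 0; 0; 0; 0; 0];
  [:: 0; 0; 0; 0; 0];
  [:: 0; 0; 0; 0; 0];
  [:: 0; 0; 0; 0; 0];
  [:: 0; 0; 0; 0; 0];
  [:: 0; 0; 0; 0; 0];
  [:: 0; 0; 0; 0; 0];
  [:: 0; 0; 0; 0; 0];
  [:: 0; 0; 0; 0; 0];
  [:: 0; 0; 0; 0; 0];
  [:: 0; 0; 0; 0; 0];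
  [:: 0; 0; 0; 0; 0];
  [:: 0; 0; 0; 0; 0];
  [:: 0; 0; 0; 0; 0];
  [:: 0; 0; 0; 0; 0];
  [:: 0; 0; 0; 0; 0];
  [:: 0; 0; 0; 0; 0];
  [:: 0; 0; 0; 0; 0];
  [:: 0; 0; 0; 0; 0];
  [:: 0; 0; 0; 0; 0]].
Definition cert_delta_coords : seq (seq Z) := [::
  [:: 0; 0; 0; 0; 0; 0; 0; 0; 0; 0; 0; 0; 0];
  [:: 0; 0; 0; 0; 0; 0; 0; 0; 0; 0; 0; 0; 0];
  [:: 0; 0; 0; 0; 0; 0; 0; 0; 0; 0; 0; 0; 0];
  [:: (-60); 0; 0; 0; 0; 0; 0; 0; 0; 0; 0; 0; 0];
  [:: 0; 0; 0; 0; 0; 0; 0; 0; 0; 0; 0; 0; 0];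
  [:: 0; 0; 0; 0; 0; 0; 0; 0; 0; 0; 0; 0; 0];
  [:: 300; 0; 0; 0; 0; 0; 0; 0; 0; 0; 0; 0; 0];
  [:: 0; (-30); 0; 0; 0; 0; 0; 0; 0; 0; 0; 0; 0];
  [:: 0; 0; 0; 0; 0; 0; 0; 0; 0; 0; 0; 0; 0];
  [:: 0; 0; 0; 0; 0; 0; 0; 0; 0; 0; 0; 0; 0];
  [:: 0; 0; 0; 0; 0; 0; 0; 0; 0; 0; 0; 0; 0];
  [:: 0; 0; 0; 0; 0; 0; 0; 0; 0; 0; 0; 0; 0];
  [:: (-600); 0; 0; 0; 0; 0; 0; 0; 0; 0; 0; 0; 0];
  [:: 0; (-30); (-60); 0; 0; 0; 0; 0; 0; 0; 0; 0; 0];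
  [:: 0; 150; 60; 0; 0; 0; 0; 0; 0; 0; 0; 0; 0];
  [:: 0; 0; 0; (-20); 0; 0; 0; 0; 0; 0; 0; 0; 0];
  [:: 0; 0; 0; 0; 0; 0; 0; 0; 0; 0; 0; 0; 0];
  [:: 1200; 0; 0; 0; 0; 0; 0; 0; 0; 0; 0; 0; 0];
  [:: (-3600); 0; 0; 0; 0; 0; 0; 0; 0; 0; 0; 0; 0];
  [:: 0; 660; 240; 0; 60; 0; 0; 0; 0; 0; 0; 0; 0];
  [:: 3600; 0; 0; 0; 0; 0; 0; 0; 0; 0; 0; 0; 0];
  [:: 0; 0; 0; 0; 0; 0; 0; 0; 0; 0; 0; 0; 0];
  [:: 0; (-1320); (-480); 0; (-120); 0; 0; 0; 0; 0; 0; 0; 0];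
  [:: 0; 0; 0; (-220); 0; (-120); 0; 0; (-30); 0; 0; 0; 0];
  [:: (-600); 0; 0; 0; 0; 0; 0; 0; 0; 0; 0; 0; 0];
  [:: 0; (-1350); (-540); 0; (-180); 0; 0; 0; 0; 0; 0; 0; 0];
  [:: 0; 2790; 1260; 0; 360; 0; 0; 0; 0; 0; 0; 0; 0];
  [:: 0; 0; 0; 640; 0; 300; 0; 0; 90; 0; 0; 0; 0];
  [:: 0; (-960); (-480); 0; (-120); 0; 0; 0; 0; 0; 0; 0; 0];
  [:: 0; 0; 0; (-650); 0; (-300); (-30); 0; (-90); 0; 0; 0; 0];
  [:: 0; 0; 0; 290; 0; 120; 30; 0; 30; 0; 0; 0; 0];
  [:: 0; 0; 0; 0; 0; 0; 0; (-15); 0; 0; 0; 0; 0];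
  [:: 0; 0; 0; 0; 0; 0; 0; 0; 0; 0; 0; 0; 0];
  [:: (-1800); 0; 0; 0; 0; 0; 0; 0; 0; 0; 0; 0; 0];
  [:: 4800; 0; 0; 0; 0; 0; 0; 0; 0; 0; 0; 0; 0];
  [:: 0; (-930); (-420); 0; (-120); 0; 0; 0; 0; 0; 0; 0; 0];
  [:: (-3600); 0; 0; 0; 0; 0; 0; 0; 0; 0; 0; 0; 0];
  [:: 0; (-2460); (-600); 0; (-240); 0; 0; 0; 0; 0; 0; 0; 0];
  [:: 0; 3930; 1380; 0; 480; 0; 0; 0; 0; 0; 0; 0; 0];
  [:: 0; 0; 0; 710; 0; 300; 30; 0; 60; 0; 0; 0; 0];
  [:: 0; 0; 0; 0; 0; 0; 0; 0; 0; 0; 0; 0; 0];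
  [:: 0; 7860; 2760; 0; 960; 0; 0; 0; 0; 0; 0; 0; 0];
  [:: 0; (-10800); (-4320); 0; (-1440); 0; 0; 0; 0; 0; 0; 0; 0];
  [:: 0; 0; 0; (-2210); 0; (-1020); (-210); 0; (-300); (-60); 0; 0; 0];
  [:: 0; 2790; 1260; 0; 360; 0; 0; 0; 0; 0; 0; 0; 0];
  [:: 0; 0; 0; 3340; 0; 1800; 660; 0; 660; 240; 0; 0; 0];
  [:: 0; 0; 0; (-2110); 0; (-1140); (-510); 0; (-420); (-180); 0; 0; 0];
  [:: 0; 0; 0; 0; 0; 0; 0; (-280); 0; 0; (-140); 20; 0];
  [:: 300; 0; 0; 0; 0; 0; 0; 0; 0; 0; 0; 0; 0];
  [:: 0; (-3030); (-1020); 0; (-360); 0; 0; 0; 0; 0; 0; 0; 0];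
  [:: 0; 3930; 1380; 0; 480; 0; 0; 0; 0; 0; 0; 0; 0];
  [:: 0; 0; 0; 500; 0; 300; 120; 0; 120; 60; 0; 0; 0];
  [:: 0; (-1320); (-480); 0; (-120); 0; 0; 0; 0; 0; 0; 0; 0];
  [:: 0; 0; 0; (-3130); 0; (-1980); (-930); 0; (-840); (-420); 0; 0; 0];
  [:: 0; 0; 0; 3060; 0; 1800; 900; 0; 720; 360; 0; 0; 0];
  [:: 0; 0; 0; 0; 0; 0; 0; 1105; 0; 0; 500; (-80); 0];
  [:: 0; 150; 60; 0; 0; 0; 0; 0; 0; 0; 0; 0; 0];
  [:: 0; 0; 0; 1600; 0; 960; 420; 0; 390; 180; 0; 0; 0];
  [:: 0; 0; 0; (-2110); 0; (-1140); (-510); 0; (-420); (-180); 0; 0; 0];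
  [:: 0; 0; 0; 0; 0; 0; 0; (-1320); 0; 0; (-600); 120; 0];
  [:: 0; 0; 0; 290; 0; 120; 30; 0; 30; 0; 0; 0; 0];
  [:: 0; 0; 0; 0; 0; 0; 0; 875; 0; 0; 400; (-100); 0];
  [:: 0; 0; 0; 0; 0; 0; 0; (-350); 0; 0; (-160); 40; 0];
  [:: 0; 0; 0; 0; 0; 0; 0; 0; 0; 0; 0; 0; (-12)];
  [:: 0; 0; 0; 0; 0; 0; 0; 0; 0; 0; 0; 0; 0];
  [:: 720; 0; 0; 0; 0; 0; 0; 0; 0; 0; 0; 0; 0];
  [:: (-1800); 0; 0; 0; 0; 0; 0; 0; 0; 0; 0; 0; 0];
  [:: 0; 360; 180; 0; 60; 0; 0; 0; 0; 0; 0; 0; 0];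
  [:: 1200; 0; 0; 0; 0; 0; 0; 0; 0; 0; 0; 0; 0];
  [:: 0; 2520; 720; 0; 240; 0; 0; 0; 0; 0; 0; 0; 0];
  [:: 0; (-3030); (-1020); 0; (-360); 0; 0; 0; 0; 0; 0; 0; 0];
  [:: 0; 0; 0; (-410); 0; (-180); (-30); 0; (-30); 0; 0; 0; 0];
  [:: 0; 0; 0; 0; 0; 0; 0; 0; 0; 0; 0; 0; 0];
  [:: 0; (-6480); (-2160); 0; (-720); 0; 0; 0; 0; 0; 0; 0; 0];
  [:: 0; 7860; 2760; 0; 960; 0; 0; 0; 0; 0; 0; 0; 0];
  [:: 0; 0; 0; 1590; 0; 780; 210; 0; 210; 60; 0; 0; 0];
  [:: 0; (-1350); (-540); 0; (-180); 0; 0; 0; 0; 0; 0; 0; 0];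
  [:: 0; 0; 0; (-2670); 0; (-1500); (-570); 0; (-570); (-240); 0; 0; 0];
  [:: 0; 0; 0; 1600; 0; 960; 420; 0; 390; 180; 0; 0; 0];
  [:: 0; 0; 0; 0; 0; 0; 0; 355; 0; 0; 140; (-20); 0];
  [:: 0; 0; 0; 0; 0; 0; 0; 0; 0; 0; 0; 0; 0];
  [:: 0; 2520; 720; 0; 240; 0; 0; 0; 0; 0; 0; 0; 0];
  [:: 0; (-2460); (-600); 0; (-240); 0; 0; 0; 0; 0; 0; 0; 0];
  [:: 0; 0; 0; (-920); 0; (-480); (-120); 0; (-120); (-60); 0; 0; 0];
  [:: 0; 0; 0; 0; 0; 0; 0; 0; 0; 0; 0; 0; 0];
  [:: 0; 0; 0; 4000; 0; 2400; 960; 0; 960; 480; 0; 0; 0];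
  [:: 0; 0; 0; (-3130); 0; (-1980); (-930); 0; (-840); (-420); 0; 0; 0];
  [:: 0; 0; 0; 0; 0; 0; 0; (-1090); 0; 0; (-440); 80; 0];
  [:: 0; (-30); (-60); 0; 0; 0; 0; 0; 0; 0; 0; 0; 0];
  [:: 0; 0; 0; (-2670); 0; (-1500); (-570); 0; (-570); (-240); 0; 0; 0];
  [:: 0; 0; 0; 3340; 0; 1800; 660; 0; 660; 240; 0; 0; 0];
  [:: 0; 0; 0; 0; 0; 0; 0; 645; 0; 0; 300; (-120); 0];
  [:: 0; 0; 0; (-650); 0; (-300); (-30); 0; (-90); 0; 0; 0; 0];
  [:: 0; 0; 0; 0; 0; 0; 0; (-860); 0; 0; (-400); 160; 0];
  [:: 0; 0; 0; 0; 0; 0; 0; 875; 0; 0; 400; (-100); 0];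
  [:: 0; 0; 0; 0; 0; 0; 0; 0; 0; 0; 0; 0; 72];
  [:: (-60); 0; 0; 0; 0; 0; 0; 0; 0; 0; 0; 0; 0];
  [:: 0; 360; 180; 0; 60; 0; 0; 0; 0; 0; 0; 0; 0];
  [:: 0; (-930); (-420); 0; (-120); 0; 0; 0; 0; 0; 0; 0; 0];
  [:: 0; 0; 0; 280; 0; 120; 0; 0; 0; 0; 0; 0; 0];
  [:: 0; 660; 240; 0; 60; 0; 0; 0; 0; 0; 0; 0; 0];
  [:: 0; 0; 0; (-920); 0; (-480); (-120); 0; (-120); (-60); 0; 0; 0];
  [:: 0; 0; 0; 500; 0; 300; 120; 0; 120; 60; 0; 0; 0];
  [:: 0; 0; 0; 0; 0; 0; 0; (-165); 0; 0; (-60); 0; 0];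
  [:: 0; 0; 0; 0; 0; 0; 0; 0; 0; 0; 0; 0; 0];
  [:: 0; 0; 0; 1590; 0; 780; 210; 0; 210; 60; 0; 0; 0];
  [:: 0; 0; 0; (-2210); 0; (-1020); (-210); 0; (-300); (-60); 0; 0; 0];
  [:: 0; 0; 0; 0; 0; 0; 0; 990; 0; 0; 360; 0; 0];
  [:: 0; 0; 0; 640; 0; 300; 0; 0; 90; 0; 0; 0; 0];
  [:: 0; 0; 0; 0; 0; 0; 0; 645; 0; 0; 300; (-120); 0];
  [:: 0; 0; 0; 0; 0; 0; 0; (-1320); 0; 0; (-600); 120; 0];
  [:: 0; 0; 0; 0; 0; 0; 0; 0; 0; 0; 0; 0; (-180)];
  [:: 0; (-30); 0; 0; 0; 0; 0; 0; 0; 0; 0; 0; 0];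
  [:: 0; 0; 0; (-410); 0; (-180); (-30); 0; (-30); 0; 0; 0; 0];
  [:: 0; 0; 0; 710; 0; 300; 30; 0; 60; 0; 0; 0; 0];
  [:: 0; 0; 0; 0; 0; 0; 0; (-165); 0; 0; (-60); 0; 0];
  [:: 0; 0; 0; (-220); 0; (-120); 0; 0; (-30); 0; 0; 0; 0];
  [:: 0; 0; 0; 0; 0; 0; 0; (-1090); 0; 0; (-440); 80; 0];
  [:: 0; 0; 0; 0; 0; 0; 0; 1105; 0; 0; 500; (-80); 0];
  [:: 0; 0; 0; 0; 0; 0; 0; 0; 0; 0; 0; 0; 240];
  [:: 0; 0; 0; (-20); 0; 0; 0; 0; 0; 0; 0; 0; 0];
  [:: 0; 0; 0; 0; 0; 0; 0; 355; 0; 0; 140; (-20); 0];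
  [:: 0; 0; 0; 0; 0; 0; 0; (-280); 0; 0; (-140); 20; 0];
  [:: 0; 0; 0; 0; 0; 0; 0; 0; 0; 0; 0; 0; (-180)];
  [:: 0; 0; 0; 0; 0; 0; 0; (-15); 0; 0; 0; 0; 0];
  [:: 0; 0; 0; 0; 0; 0; 0; 0; 0; 0; 0; 0; 72];
  [:: 0; 0; 0; 0; 0; 0; 0; 0; 0; 0; 0; 0; (-12)];
  [:: 0; 0; 0; 0; 0; 0; 0; 0; 0; 0; 0; 0; 0]].
Local Close Scope Z_scope.

Definition cert_test_words : seq word := [::
  [:: true; true; true; true; true; true; false];
  [:: true; true; true; true; true; false; false];
  [:: true; true; true; true; false; true; false];
  [:: true; true; true; true; false; false; false];
  [:: true; true; true; false; true; true; false];
  [:: true; true; true; false; true; false; false];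
  [:: true; true; true; false; false; true; false];
  [:: true; true; true; false; false; false; false];
  [:: true; true; false; true; true; false; false];
  [:: true; true; false; true; false; true; false];
  [:: true; true; false; true; false; false; false];
  [:: true; true; false; false; false; true; false];
  [:: true; true; false; false; false; false; false]].

Definition kernel_coords (v : word) : seq Z := nth [::] cert_kernel_coords (index v (words 7)).
Definition delta_weights (w : word) : seq Z := nth [::] cert_delta_coords (index w (words 7)).

Definition sumZ (n : nat) (F : nat -> Z) : Z := foldr (fun j s => F j + s) 0 (iota 0 n).

Lemma sumZE n F : sumZ n F = \sum_(j < n) F j.
Proof. by rewrite -(big_mkord xpredT) /index_iota subn0 unlock. Qed.

Definition dotZ (n : nat) (s t : seq Z) : Z := sumZ n (fun i => nth 0 s i * nth 0 t i).

(* The delta-values of each left-normed word are tabulated once, outside the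
   double loop over pairs of words. *)
Definition cert_row (v : word) : word * seq Z * seq Z :=
  (v, kernel_coords v, [seq delta_coef (term_coef Z (ln_word v)) e | e <- cert_test_words]).

Definition certificate_holds (rows : seq (word * seq Z * seq Z)) : bool :=
  all (fun w =>
    let kw := [seq kernel_coef Z j w | j <- iota 0 5] in
    let dw := delta_weights w in
    all (fun '(v, kv, ev) => 60 * term_coef Z (ln_word v) w - dotZ 13 dw ev == dotZ 5 kv kw) rows)
  (words 7).

Lemma certificate : certificate_holds (map cert_row (words 7)).
Proof. by vm_compute. Qed.

Lemma certificate_coef v w : size v = 7%N -> size w = 7%N ->
  60 * term_coef Z (ln_word v) w
  - \sum_(l < 13) nth 0 (delta_weights w) l *
                   delta_coef (term_coef Z (ln_word v)) (nth [::] cert_test_words l)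
  = \sum_(j < 5) nth 0 (kernel_coords v) j * kernel_coef Z j w.
Proof.
move=> /eqP v7 /eqP w7.
have -> : \sum_(j < 5) nth 0 (kernel_coords v) j * kernel_coef Z j w =
          dotZ 5 (kernel_coords v) [seq kernel_coef Z j w | j <- iota 0 5].
  by rewrite /dotZ sumZE; apply: eq_bigr => j _; rewrite (nth_map 0%N) ?size_iota ?nth_iota.
rewrite (_ : \sum_(l < 13) _ = dotZ 13 (delta_weights w) (cert_row v).2); last first.
  by rewrite /dotZ sumZE; apply: eq_bigr => l _; rewrite (nth_map [::]).
have /allP /(_ w) := certificate; rewrite mem_words => /(_ w7) /allP /(_ (cert_row v)).
by rewrite map_f ?mem_words // => /(_ isT) /eqP.
Qed.

Section HardDirection.
Variable K : fieldType.
Local Notation series := (series K).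
Local Notation G := (gens5p5 (K:=K)).

Definition cert_map (p : series) : series := fun w =>
  60 * p w - \sum_(l < 13) zK K (nth 0 (delta_weights w) l) * delta p (nth [::] cert_test_words l).

Lemma cert_mapD p q : cert_map (sadd p q) = sadd (cert_map p) (cert_map q).
Proof.
apply: funext => w; rewrite /cert_map deltaD !saddE.
under eq_bigr do rewrite saddE mulrDr.
by rewrite big_split /=; ring.
Qed.

Lemma cert_mapZ c p : cert_map (sscale c p) = sscale c (cert_map p).
Proof.
apply: funext => w; rewrite /cert_map deltaZ !sscaleE mulrBr mulr_sumr.
by under eq_bigr do rewrite sscaleE mulrCA; rewrite mulrCA.
Qed.

Lemma cert_map0 : cert_map (s0 K) = s0 K.
Proof.
apply: funext => w; rewrite /cert_map delta0 s0E mulr0 big1 ?subr0 // => l _.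
by rewrite s0E mulr0.
Qed.

Lemma cert_map_ker p : delta p = s0 K -> cert_map p = sscale 60 p.
Proof.
move=> dp; apply: funext => w; rewrite /cert_map dp big1 ?subr0 // => l _.
by rewrite s0E mulr0.
Qed.

(* [index w (words 7)] runs past the end of the table. *)
Lemma delta_weights_deg w l : size w != 7%N -> nth 0 (delta_weights w) l = 0.
Proof.
by move=> w7; rewrite /delta_weights memNindex ?mem_words // nth_default.
Qed.

Lemma cert_map_ln_word v : size v = 7%N ->
  cert_map (eval_term K (ln_word v)) =
  (fun w => \sum_(j < 5) zK K (nth 0 (kernel_coords v) j) * kernel_elt K j w).
Proof.
move=> v7; apply: funext => w; rewrite /cert_map.
have [w7|w7] := eqVneq (size w) 7%N.
  set T := term_coef Z (ln_word v).
  transitivity (zK K (60 * T w - \sum_(l < 13)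
                  nth 0 (delta_weights w) l * delta_coef T (nth [::] cert_test_words l))).
    rewrite rmorphB rmorphM rmorph_nat rmorph_sum eval_term_zcoef.
    by congr (_ - _); apply: eq_bigr => l _; rewrite rmorphM delta_coefE -rmorph_delta_coef.
  by rewrite certificate_coef // rmorph_sum; apply: eq_bigr => j _; rewrite rmorphM kernel_eltE.
have ln7 : deg (ln_word v) = 7%N by case: v v7 => // a r [r6]; rewrite deg_left_normed r6.
rewrite eval_term_zcoef /= term_coef_deg ?ln7 // rmorph0 mulr0 sub0r.
rewrite big1 => [|l _]; last by rewrite delta_weights_deg // rmorph0 mul0r.
by rewrite oppr0 big1 // => j _; rewrite kernel_eltE kernel_coef_deg // rmorph0 mulr0.
Qed.

Lemma lie_gen_cert_map p : left_normed_span 7 p -> lie_gen G (cert_map p).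
Proof.
elim=> [|p1 q1 _ IH1 _ IH2|c p1 _ IH|a r r6].
- by rewrite cert_map0; apply: lie_gen_zero.
- by rewrite cert_mapD; apply: lie_gen_add.
- by rewrite cert_mapZ; apply: lie_gen_scale.
rewrite -[left_normed a r]/(ln_word (a :: r)) cert_map_ln_word //.
exact: (lie_gen_sum 5 (fun j => zK K (nth 0 (kernel_coords (a :: r)) j)) (@lie_gen_kernel_elt K)).
Qed.

Lemma lie_gen_of_delta_eq0 (f : series) : [pchar K] =i pred0 ->
  freeLie f -> homog 7 f -> delta f = s0 K -> lie_gen G f.
Proof.
move=> hK hf f7 df.
have n60 : (60%:R : K) != 0 by rewrite (proj1 (pcharf0P K) hK).
have -> : f = sscale 60^-1 (cert_map f).
  by apply: funext => w; rewrite cert_map_ker // !sscaleE mulrA mulVf ?mul1r.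
apply/lie_gen_scale/lie_gen_cert_map.
by rewrite -(homog_partE f7); apply: freeLie_homog_part.
Qed.

End HardDirection.

Unset Implicit Arguments.
Theorem proposition5p5 (K : fieldType) (hK : [pchar K] =i pred0)
  (f : series K) (hfL : freeLie f) (hf0 : f <> s0 K) (hdeg : homog 7 f) :
  delta f = s0 K <-> lie_gen (gens5p5 (K:=K)) f.
Proof.
split; first exact: lie_gen_of_delta_eq0.
exact/lie_gen_delta_eq0/delta_gens5p5.
Qed.
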